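(* Let $G=(V,E)$ be a finite graph, $\varepsilon$ an orientation of $G$, $q$ a positive integer, and $f_1,f_2\in F(G,\varepsilon;q)$. If $f_1(e)\equiv f_2(e)\pmod q$ for all $e\in E$, then the orientations $\varepsilon_{f_1}$ and $\varepsilon_{f_2}$ are Eulerian equivalent.
   Context: An orientation assigns each edge (including loops) one of its two directions; $\varepsilon(v,e)=1$ ($-1$) if non-loop $e$ points out of (into) end-vertex $v$, $0$ otherwise. $F(G,\varepsilon;q)=\{f:E\to\mathbb R: \sum_e m_{v,e}f(e)=0\ \forall v,\ |f(e)|<q\ \forall e\}$, where $m_{v,e}=\varepsilon(v,e)$ for non-loops and $0$ for loops (real $q$-flows). For $f:E\to\mathbb R$, $\varepsilon_f$ is the orientation that agrees with $\varepsilon$ on edges $e$ with $f(e)>0$ and is opposite to $\varepsilon$ on edges with $f(e)\le0$. Two orientations are Eulerian equivalent if the spanning subgraph formed by the edges on which they differ is directed Eulerian (in-degree equals out-degree at every vertex, a loop contributing one of each) with respect to either of them. *)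

From mathcomp Require Import all_boot all_order all_algebra.
Set Implicit Arguments. Unset Strict Implicit. Unset Printing Implicit Defensive.
Import Order.TTheory GRing.Theory Num.Theory.
Local Open Scope ring_scope.

(* A finite graph (multigraph, loops allowed) with vertex set V and edge set E:
   each edge e has two end-vertices, listed as the pair [ends e].
   An orientation is a map [o : E -> bool]: [o e = true] means e points from
   (ends e).1 to (ends e).2, [o e = false] means the opposite direction. *)

Definition tail (V E : finType) (ends : E -> V * V) (o : E -> bool) (e : E) : V :=
  if o e then (ends e).1 else (ends e).2.
Definition head (V E : finType) (ends : E -> V * V) (o : E -> bool) (e : E) : V :=
  if o e then (ends e).2 else (ends e).1.

Definition is_loop (V E : finType) (ends : E -> V * V) (e : E) : bool :=
  (ends e).1 == (ends e).2.

Definition inc_sign (R : numDomainType) (V E : finType) (ends : E -> V * V)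
  (o : E -> bool) (v : V) (e : E) : R :=
  if is_loop ends e then 0
  else if tail ends o e == v then 1
  else if head ends o e == v then -1
  else 0.

Definition real_qflow (R : realFieldType) (V E : finType) (ends : E -> V * V)
  (o : E -> bool) (q : R) (f : E -> R) : Prop :=
  (forall v : V, \sum_(e : E) inc_sign R ends o v e * f e = 0) /\
  (forall e : E, `|f e| < q).

Definition orient_of (R : realFieldType) (E : finType) (o : E -> bool) (f : E -> R)
  : E -> bool :=
  fun e => if 0 < f e then o e else ~~ o e.

(* The edge set D is directed Eulerian w.r.t. orientation o: at every vertex
   in-degree equals out-degree (a loop counts once as outgoing and once as
   incoming). *)
Definition directed_eulerian (V E : finType) (ends : E -> V * V)
  (o : E -> bool) (D : {set E}) : Prop :=
  forall v : V, #|[set e in D | tail ends o e == v]| = #|[set e in D | head ends o e == v]|.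

(* Eulerian equivalence: the edges on which o1 and o2 differ form a directed
   Eulerian subgraph (w.r.t. o1; equivalently w.r.t. o2, which reverses them). *)
Definition eulerian_equiv (V E : finType) (ends : E -> V * V) (o1 o2 : E -> bool) : Prop :=
  directed_eulerian ends o1 [set e | o1 e != o2 e].

(* Since |f1 e|, |f2 e| < q and q divides f1 e - f2 e, the difference f1 e - f2 e is q, 0 or -q,
   and it is nonzero exactly when one of f1 e, f2 e is positive and the other is not, i.e. exactly
   on the edges D where eps_f1 and eps_f2 differ.  There f1 - f2 is q times the unit flow along D
   oriented by eps_f1; being a difference of two flows it is conservative, so every vertex has as
   many edges of D leaving it as entering it. *)
From Pilot Require Import Defs.
From mathcomp Require Import all_boot all_order all_algebra.
From mathcomp Require Import lra zify.
Import Order.TTheory GRing.Theory Num.Theory.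
Set Implicit Arguments. Unset Strict Implicit. Unset Printing Implicit Defensive.
Local Open Scope ring_scope.

Section IncidenceSigns.

Variables (R : numDomainType) (V E : finType) (ends : E -> V * V).

Lemma inc_signE (o : E -> bool) (v : V) (e : E) :
  inc_sign R ends o v e = (Defs.tail ends o e == v)%:R - (Defs.head ends o e == v)%:R.
Proof.
rewrite /inc_sign /is_loop /Defs.tail /Defs.head.
case: (o e); case: (ends e) => a b /=; have [->|ab] := eqVneq a b;
  rewrite ?subrr //; case: eqP => [<-|_]; case: eqP => [ba|_];
  rewrite ?subrr ?subr0 ?sub0r //; by rewrite ba eqxx in ab.
Qed.

Lemma inc_sign_flip (o o' : E -> bool) (v : V) (e : E) :
  inc_sign R ends o' v e =
    if o' e == o e then inc_sign R ends o v e else - inc_sign R ends o v e.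
Proof.
by rewrite !inc_signE /Defs.tail /Defs.head; case: (o e); case: (o' e); rewrite ?opprB.
Qed.

Lemma sum_inc_sign_card (o : E -> bool) (D : {set E}) (v : V) :
  \sum_(e in D) inc_sign R ends o v e =
    #|[set e in D | Defs.tail ends o e == v]|%:R - #|[set e in D | Defs.head ends o e == v]|%:R.
Proof.
rewrite (eq_bigr _ (fun e _ => inc_signE o v e)) sumrB -!natr_sum -!sum1_card.
by congr (_%:R - _%:R); rewrite -big_mkcondr big_mkcond [RHS]big_mkcond;
  apply: eq_bigr => e _; rewrite !inE; case: (e \in D); case: (_ == v).
Qed.

End IncidenceSigns.

Lemma directed_eulerian_balanced (R : numDomainType) (V E : finType)
  (ends : E -> V * V) (o : E -> bool) (D : {set E}) :
  (forall v, \sum_(e in D) inc_sign R ends o v e = 0) -> directed_eulerian ends o D.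
Proof.
move=> bal v; apply/eqP; rewrite -(eqr_nat R) -subr_eq0.
by rewrite -sum_inc_sign_card bal.
Qed.

Lemma conservative_sub (R : numDomainType) (V E : finType) (ends : E -> V * V)
  (o : E -> bool) (f1 f2 : E -> R) (v : V) :
  \sum_(e : E) inc_sign R ends o v e * f1 e = 0 ->
  \sum_(e : E) inc_sign R ends o v e * f2 e = 0 ->
  \sum_(e : E) inc_sign R ends o v e * (f1 e - f2 e) = 0.
Proof.
by move=> c1 c2; under eq_bigr do rewrite mulrBr; rewrite sumrB c1 c2 subrr.
Qed.

Lemma congr_mod_sub_sign (R : realDomainType) (q x y : R) (k : int) :
  0 < q -> `|x| < q -> `|y| < q -> x - y = k%:~R * q ->
  x - y = ((0 < x)%R%:R - (0 < y)%R%:R) * q.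
Proof.
move=> q0 /ltr_normlP [x1 x2] /ltr_normlP [y1 y2] xy.
have : (k%:~R : R) < 2%:~R by nra.
rewrite ltr_int => kl.
have : (-2)%:~R < (k%:~R : R) by rewrite mulrNz; nra.
rewrite ltr_int => kg.
have : k = -1 \/ k = 0 \/ k = 1 by lia.
by case=> [|[]] kE; rewrite kE ?mulN1r ?mul0r ?mul1r in xy;
  case: (ltrP 0 x); case: (ltrP 0 y) => /=; lra.
Qed.

Lemma sign_diff_orient_of (R : realFieldType) (V E : finType) (ends : E -> V * V)
  (eps : E -> bool) (f1 f2 : E -> R) (v : V) (e : E) :
  inc_sign R ends eps v e * ((0 < f1 e)%R%:R - (0 < f2 e)%R%:R) =
    (orient_of eps f1 e != orient_of eps f2 e)%:R * inc_sign R ends (orient_of eps f1) v e.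
Proof.
rewrite (inc_sign_flip _ _ eps (orient_of eps f1)) /orient_of.
case: (0 < f1 e); case: (0 < f2 e); case: (eps e) => /=;
  by rewrite ?subrr ?mulr0 ?mul0r ?subr0 ?mulr1 ?mul1r ?sub0r ?mulrN1.
Qed.

Theorem lemma5p3 (R : realFieldType) (V E : finType) (ends : E -> V * V)
  (eps : E -> bool) (q : nat) (f1 f2 : E -> R) :
  (0 < q)%N ->
  real_qflow ends eps q%:R f1 ->
  real_qflow ends eps q%:R f2 ->
  (forall e : E, exists k : int, f1 e - f2 e = k%:~R * q%:R) ->
  eulerian_equiv ends (orient_of eps f1) (orient_of eps f2).
Proof.
move=> q0 [cons1 lt1] [cons2 lt2] congr12.
have qpos : (0 : R) < q%:R by rewrite ltr0n.
apply: (directed_eulerian_balanced (R := R)) => v.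
apply: (mulIf (lt0r_neq0 qpos)); rewrite mul0r -[RHS](conservative_sub (cons1 v) (cons2 v)).
rewrite mulr_suml big_mkcond; apply: eq_bigr => e _; have [k dk] := congr12 e.
rewrite (congr_mod_sub_sign qpos (lt1 e) (lt2 e) dk) mulrA sign_diff_orient_of inE.
by case: (orient_of eps f1 e != _); rewrite ?mul1r ?mul0r.
Qed.
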